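(* Let $W\in[0,1]^{k\times k}$ be a symmetric positive semidefinite matrix with unit diagonal, let $\mu>0$, and consider the collaborative learning problem with strategy space $\mathbb{R}_+^k$, utilities $u_i({\boldsymbol\theta})=W_i^\top{\boldsymbol\theta}$ ($W_i$ the $i$-th column of $W$) and thresholds $\mu_i=\mu$ for all $i\in[k]$. Let ${\boldsymbol\theta}^{\mathrm{eq}}$ be an optimal stable equilibrium, let $I=\{i:\theta^{\mathrm{eq}}_i=0\}$, and let $\bar W$ and $\bar{\boldsymbol\theta}^{\mathrm{eq}}$ be the restrictions of $W$ (rows and columns) and ${\boldsymbol\theta}^{\mathrm{eq}}$ to the index set $[k]\setminus I$. Then $\bar{\boldsymbol\theta}^{\mathrm{eq}}$ is a socially optimal solution for the agents in $[k]\setminus I$ with utilities $u_i(\bar{\boldsymbol\theta})=\bar W_i^\top\bar{\boldsymbol\theta}$ and threshold $\mu$, i.e. it is an optimal solution of $\min\{\mathbf{1}^\top{\bf x}:\bar W{\bf x}\ge\mu\mathbf{1},\ {\bf x}\ge\mathbf{0}\}$. Furthermore, for any socially optimal solution $\bar{\boldsymbol\theta}$ for the agents $[k]\setminus I$, its extension $\tilde{\boldsymbol\theta}\in\mathbb{R}_+^k$ defined by $\tilde\theta_i=0$ for $i\in I$ and $\tilde\theta_i=\bar\theta_i$ otherwise is an optimal stable equilibrium for the agents $[k]$.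
   Context: ${\boldsymbol\theta}$ is feasible if $u_i({\boldsymbol\theta})\ge\mu_i$ for all $i$. A feasible ${\boldsymbol\theta}\in\mathbb{R}_+^k$ is a stable equilibrium if for no $i$ is there $0\le\theta_i'<\theta_i$ with $u_i(\theta_i',{\boldsymbol\theta}_{-i})\ge\mu_i$ (${\boldsymbol\theta}$ with $i$-th entry replaced by $\theta_i'$). An optimal stable equilibrium is a stable equilibrium minimizing $\mathbf{1}^\top{\boldsymbol\theta}$. A socially optimal solution minimizes $\mathbf{1}^\top{\boldsymbol\theta}$ over all feasible ${\boldsymbol\theta}\ge\mathbf{0}$. *)

From HB Require Import structures.
From mathcomp Require Import all_boot all_order all_algebra.
Set Implicit Arguments. Unset Strict Implicit. Unset Printing Implicit Defensive.
Import Order.TTheory GRing.Theory Num.Theory.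
Local Open Scope ring_scope.

(* Collaborative learning problem with agents indexed by a finite type T,
   strategy space R_+^T, utilities u_i(theta) = sum_j W j i * theta j
   (= W_i^T theta, W symmetric) and common threshold mu. *)
Section CL.
Variables (R : realFieldType) (T : finType).

Definition util (W : T -> T -> R) (i : T) (theta : T -> R) : R :=
  \sum_(j : T) W j i * theta j.

Definition repl (theta : T -> R) (i : T) (t : R) : T -> R :=
  fun j => if j == i then t else theta j.

Definition total (theta : T -> R) : R := \sum_(j : T) theta j.

Definition feasible (W : T -> T -> R) (mu : R) (theta : T -> R) : Prop :=
  (forall j, 0 <= theta j) /\ (forall i, mu <= util W i theta).

Definition stable_eq (W : T -> T -> R) (mu : R) (theta : T -> R) : Prop :=
  feasible W mu theta /\
  forall i (t : R), 0 <= t -> t < theta i -> ~ (mu <= util W i (repl theta i t)).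

Definition optimal_stable_eq (W : T -> T -> R) (mu : R) (theta : T -> R) : Prop :=
  stable_eq W mu theta /\
  forall theta', stable_eq W mu theta' -> total theta <= total theta'.

Definition socially_optimal (W : T -> T -> R) (mu : R) (theta : T -> R) : Prop :=
  feasible W mu theta /\
  forall theta', feasible W mu theta' -> total theta <= total theta'.
End CL.

Definition restr_mx (R : Type) (k : nat) (P : pred 'I_k) (W : 'M[R]_k)
  : {i : 'I_k | P i} -> {i : 'I_k | P i} -> R :=
  fun i j => W (val i) (val j).

Definition restr_vec (R : Type) (k : nat) (P : pred 'I_k) (theta : 'I_k -> R)
  : {i : 'I_k | P i} -> R := fun i => theta (val i).

Definition extend (R : nzRingType) (k : nat) (P : pred 'I_k)
  (x : {i : 'I_k | P i} -> R) : 'I_k -> R :=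
  fun i => match @insub _ P {i : 'I_k | P i} i with
           | Some s => x s
           | None => 0
           end.

Arguments restr_mx {R k} P W _ _.
Arguments restr_vec {R k} P theta _.
Arguments extend {R k P} x _.

From Pilot Require Import Defs.
From HB Require Import structures.
From mathcomp Require Import all_boot all_order all_algebra.
From mathcomp Require Import ring lra.
Set Implicit Arguments. Unset Strict Implicit.
Import Order.TTheory GRing.Theory Num.Theory.
Local Open Scope ring_scope.

(* At a stable equilibrium with unit diagonal every agent contributing a
   nonzero amount is tight, u_i(theta) = mu, or it could contribute less.
   Since W is symmetric, for every y vanishing outside the support of
   theta^eq we get the duality identity
     sum_i theta^eq_i (u_i(y) - mu) = mu (1^T y - 1^T theta^eq),
   so a y that is feasible on that support costs at least as much as
   theta^eq, and if it costs exactly as much it is tight there too.  In the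
   latter case d = y - theta^eq satisfies d_i (W d)_i = 0 for all i, hence
   d^T W d = 0 and, W being positive semidefinite, W d = 0: y has the same
   utilities as theta^eq, so it is again an optimal stable equilibrium. *)

Section Utility.
Variables (R : realFieldType) (T : finType) (W : T -> T -> R) (mu : R).

Lemma utilB i (x y : T -> R) :
  util W i (fun j => x j - y j) = util W i x - util W i y.
Proof. by rewrite /util -sumrB; apply: eq_bigr => j _; rewrite mulrBr. Qed.

Lemma util_repl i (th : T -> R) t :
  util W i (repl th i t) = util W i th + (t - th i) * W i i.
Proof.
rewrite /util (bigD1 i) //= [in RHS](bigD1 i) //= /repl eqxx.
rewrite (eq_bigr (fun j => W j i * th j)); last by move=> j /negbTE ->.
ring.
Qed.

Definition tight_on_support (th : T -> R) := forall i, th i != 0 -> util W i th = mu.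

Section UnitDiagonal.
Hypothesis W_diag : forall i, W i i = 1.

Lemma stable_eq_tight th : stable_eq W mu th -> tight_on_support th.
Proof.
move=> [[th_ge0 th_feas] th_stable] i th_i_neq0.
apply/eqP; rewrite eq_le th_feas andbT leNgt; apply/negP => slack.
have th_i_gt0 : 0 < th i by rewrite lt_def th_i_neq0 th_ge0.
case: (leP (th i) (util W i th - mu)) => [th_i_small | th_i_large].
- by apply: (th_stable i 0); rewrite // util_repl W_diag; lra.
- apply: (th_stable i (th i - (util W i th - mu))); try lra.
  by rewrite util_repl W_diag; lra.
Qed.

Lemma tight_stable_eq th :
  feasible W mu th -> tight_on_support th -> stable_eq W mu th.
Proof.
move=> th_feas th_tight; split=> // i t t_ge0 t_lt.
have th_i_neq0 : th i != 0 by rewrite gt_eqF // (le_lt_trans t_ge0).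
by rewrite util_repl W_diag th_tight //; lra.
Qed.

End UnitDiagonal.

Section Duality.
Hypothesis W_sym : forall i j, W i j = W j i.

Lemma sum_mul_util_sym (x y : T -> R) :
  \sum_i y i * util W i x = \sum_i x i * util W i y.
Proof.
rewrite /util; under eq_bigr do rewrite big_distrr.
rewrite exchange_big; apply: eq_bigr => j _ /=.
rewrite [RHS]big_distrr; apply: eq_bigr => i _ /=.
by rewrite W_sym mulrCA mulrA mulrC.
Qed.

Variable th : T -> R.
Hypotheses (th_ge0 : forall i, 0 <= th i) (th_tight : tight_on_support th).

Lemma complementary_slackness (y : T -> R) :
  (forall i, th i = 0 -> y i = 0) ->
  \sum_i th i * (util W i y - mu) = mu * (Defs.total y - Defs.total th).
Proof.
move=> y_supp; under eq_bigr do rewrite mulrBr.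
rewrite sumrB sum_mul_util_sym.
have -> : \sum_i y i * util W i th = \sum_i y i * mu.
  apply: eq_bigr => i _; have [/y_supp -> | /th_tight -> //] := eqVneq (th i) 0.
  by rewrite !mul0r.
by rewrite -!mulr_suml mulrBr ![mu * _]mulrC.
Qed.

Hypothesis mu_gt0 : 0 < mu.
Variable y : T -> R.
Hypotheses (y_supp : forall i, th i = 0 -> y i = 0)
  (y_feas : forall i, th i != 0 -> mu <= util W i y).

Lemma slack_ge0 i : 0 <= th i * (util W i y - mu).
Proof.
have [-> | th_i_neq0] := eqVneq (th i) 0; first by rewrite mul0r.
by rewrite mulr_ge0 // subr_ge0 y_feas.
Qed.

Lemma total_le_supported : Defs.total th <= Defs.total y.
Proof.
have : 0 <= \sum_i th i * (util W i y - mu) by apply: sumr_ge0 => i _; apply: slack_ge0.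
by rewrite complementary_slackness // pmulr_rge0 // subr_ge0.
Qed.

Lemma tight_supported_of_total_eq :
  Defs.total y = Defs.total th -> forall i, th i != 0 -> util W i y = mu.
Proof.
move=> tot_eq i th_i_neq0.
have slack0 := @complementary_slackness y y_supp.
rewrite tot_eq subrr mulr0 in slack0.
have /eqP := psumr_eq0P (fun j _ => slack_ge0 j) slack0 (i := i) isT.
by rewrite mulf_eq0 (negbTE th_i_neq0) subr_eq0 => /eqP.
Qed.

End Duality.
End Utility.

Section PositiveSemidefinite.
Variables (R : realFieldType) (n : nat) (A : 'M[R]_n).
Hypothesis A_sym : A^T = A.
Hypothesis A_psd : forall y : 'cV[R]_n, 0 <= (y^T *m A *m y) 0 0.

Let form (u v : 'cV[R]_n) : R := (u^T *m A *m v) 0 0.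

Lemma form_sym u v : form u v = form v u.
Proof.
rewrite /form -[in RHS](trmxK (v^T *m A *m u)) [RHS]mxE.
by rewrite !trmx_mul trmxK A_sym mulmxA.
Qed.

Lemma form_combination (s t : R) u v :
  form (s *: u + t *: v) (s *: u + t *: v) =
  s ^+ 2 * form u u + 2 * s * t * form u v + t ^+ 2 * form v v.
Proof.
have vu := form_sym v u; rewrite /form in vu *.
rewrite [(_ + _)^T]linearD /= [(s *: u)^T]linearZ [(t *: v)^T]linearZ /=.
rewrite !mulmxDl !mulmxDr -!scalemxAl -!scalemxAr.
rewrite !mxE in vu; rewrite !mxE vu; ring.
Qed.

Lemma psd_form_eq0 x : form x x = 0 -> A *m x = 0.
Proof.
move=> xx0; apply/matrixP => i j; rewrite (ord1 j) [RHS]mxE.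
pose e : 'cV[R]_n := delta_mx i 0.
have -> : (A *m x) i 0 = form e x.
  by rewrite /form trmx_delta -mulmxA -rowE [RHS]mxE.
set a := form e x; set b := form e e.
have b_ge0 : 0 <= b := A_psd e.
(* For this [y], [0 <= form y y = - a ^+ 2 * (b + 2)], which forces [a = 0]. *)
pose y := (b + 1) *: x + (- a) *: e.
have : 0 <= form y y := A_psd y.
rewrite form_combination xx0 (form_sym x e) -/a -/b => y_ge0.
apply/eqP; rewrite -sqrf_eq0 eq_le sqr_ge0 andbT.
nra.
Qed.
End PositiveSemidefinite.

Section MatrixUtility.
Variables (R : realFieldType) (k : nat) (W : 'M[R]_k).

Lemma util_mulmx (th : 'I_k -> R) i : util W i th = (W^T *m \col_j th j) i 0.
Proof. by rewrite mxE; apply: eq_bigr => j _; rewrite !mxE. Qed.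

Lemma quad_form_util (th : 'I_k -> R) :
  ((\col_j th j)^T *m W *m \col_j th j) 0 0 = \sum_i th i * util W i th.
Proof.
rewrite /util mxE; apply: eq_bigr => i _; rewrite mulrC; congr (_ * _).
  by rewrite mxE.
by rewrite mxE; apply: eq_bigr => j _; rewrite !mxE mulrC.
Qed.

Lemma util_eq0_of_psd (d : 'I_k -> R) :
  W^T = W -> (forall x : 'cV[R]_k, 0 <= (x^T *m W *m x) 0 0) ->
  (forall i, d i * util W i d = 0) -> forall i, util W i d = 0.
Proof.
move=> W_sym W_psd d_orth i.
have Wd0 : W *m \col_j d j = 0.
  by apply: psd_form_eq0 => //; rewrite quad_form_util big1.
by rewrite util_mulmx W_sym Wd0 mxE.
Qed.

End MatrixUtility.

Section Restriction.
Variables (R : realFieldType) (k : nat) (P : pred 'I_k).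

Lemma sum_sig_val (F : 'I_k -> R) :
  (forall i, ~~ P i -> F i = 0) -> \sum_(s : {i | P i}) F (val s) = \sum_i F i.
Proof.
by move=> F_out; rewrite -(big_sub P F) [RHS](bigID P) /= [X in _ + X]big1 ?addr0.
Qed.

Lemma extend_val (x : {i | P i} -> R) s : extend x (val s) = x s.
Proof. by rewrite /extend valK. Qed.

Lemma extend_notin (x : {i | P i} -> R) i : ~~ P i -> extend x i = 0.
Proof. by move=> Pi; rewrite /extend insubN. Qed.

Lemma extend_ge0 (x : {i | P i} -> R) :
  (forall s, 0 <= x s) -> forall i, 0 <= extend x i.
Proof.
move=> x_ge0 i; case: (boolP (P i)) => [Pi | /extend_notin -> //].
by rewrite -[i]/(val (exist _ i Pi)) extend_val.
Qed.

Lemma sum_mul_extend (F : 'I_k -> R) (x : {i | P i} -> R) :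
  \sum_i F i * extend x i = \sum_s F (val s) * x s.
Proof.
rewrite -sum_sig_val; last by move=> i /extend_notin ->; rewrite mulr0.
by apply: eq_bigr => s _; rewrite extend_val.
Qed.

Lemma total_extend (x : {i | P i} -> R) : Defs.total (extend x) = Defs.total x.
Proof.
rewrite /Defs.total -(@sum_sig_val (extend x)); last exact: extend_notin.
by apply: eq_bigr => s _; rewrite extend_val.
Qed.

Lemma util_extend (W : 'M[R]_k) (x : {i | P i} -> R) s :
  util W (val s) (extend x) = util (restr_mx P W) s x.
Proof. by rewrite /util sum_mul_extend. Qed.

Section Vanishing.
Variable th : 'I_k -> R.
Hypothesis th_out : forall i, ~~ P i -> th i = 0.

Lemma total_restr_vec : Defs.total (restr_vec P th) = Defs.total th.
Proof. exact: sum_sig_val. Qed.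

Lemma util_restr_vec (W : 'M[R]_k) s :
  util (restr_mx P W) s (restr_vec P th) = util W (val s) th.
Proof.
rewrite /util (sum_sig_val (F := fun j => W j (val s) * th j)) //.
by move=> i /th_out ->; rewrite mulr0.
Qed.

End Vanishing.
End Restriction.

Section OptimalStableEquilibrium.
Variables (R : realFieldType) (k : nat) (W : 'M[R]_k) (mu : R).
Hypotheses (W_sym : W^T = W)
  (W_psd : forall x : 'cV[R]_k, 0 <= (x^T *m W *m x) 0 0)
  (W_diag : forall i, W i i = 1) (mu_gt0 : 0 < mu).
Variable theq : 'I_k -> R.
Hypothesis theq_opt : optimal_stable_eq W mu theq.

Let P : pred 'I_k := fun i => theq i != 0.

Let W_symmetric i j : W i j = W j i.
Proof. by rewrite -{1}W_sym mxE. Qed.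

Let theq_ge0 : forall i, 0 <= theq i := theq_opt.1.1.1.
Let theq_feas : forall i, mu <= util W i theq := theq_opt.1.1.2.
Let theq_tight : tight_on_support W mu theq := stable_eq_tight W_diag theq_opt.1.

Let theq_out i : ~~ P i -> theq i = 0.
Proof. by move/negPn/eqP. Qed.

Let extend_supp (x : {i | P i} -> R) i : theq i = 0 -> extend x i = 0.
Proof. by move=> theq_i0; apply: extend_notin; rewrite negbK theq_i0. Qed.

Let extend_feas (x : {i | P i} -> R) :
  feasible (restr_mx P W) mu x -> forall i, P i -> mu <= util W i (extend x).
Proof. by move=> [_ x_feas] i Pi; rewrite -[i]/(val (exist P i Pi)) util_extend. Qed.

Lemma restr_theq_socially_optimal :
  socially_optimal (restr_mx P W) mu (restr_vec P theq).
Proof.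
split; first by split=> s; [apply: theq_ge0 | rewrite util_restr_vec].
move=> x x_feas; rewrite total_restr_vec // -total_extend.
exact: total_le_supported (extend_supp x) (extend_feas x_feas).
Qed.

Variable thbar : {i | P i} -> R.
Hypothesis thbar_opt : socially_optimal (restr_mx P W) mu thbar.

Lemma total_extend_thbar : Defs.total (extend thbar) = Defs.total theq.
Proof.
have [restr_feas restr_opt] := restr_theq_socially_optimal.
rewrite total_extend -(total_restr_vec theq_out); apply/eqP.
by rewrite eq_le thbar_opt.2 // restr_opt //; case: thbar_opt.
Qed.

Lemma util_extend_thbar i : util W i (extend thbar) = util W i theq.
Proof.
have tight := tight_supported_of_total_eq W_symmetric theq_ge0 theq_tight
  (extend_supp thbar) (extend_feas thbar_opt.1) total_extend_thbar.
apply/eqP; rewrite -subr_eq0 -utilB; apply/eqP; apply: util_eq0_of_psd => // j.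
rewrite utilB; have [theq_j0 | theq_j_neq0] := eqVneq (theq j) 0.
  by rewrite theq_j0 extend_supp // subrr mul0r.
by rewrite tight // theq_tight // subrr mulr0.
Qed.

Lemma extend_thbar_optimal_stable_eq : optimal_stable_eq W mu (extend thbar).
Proof.
split; last by move=> th' th'_stable; rewrite total_extend_thbar; apply: theq_opt.2.
apply: tight_stable_eq => //.
  split; first exact: extend_ge0 thbar_opt.1.1.
  by move=> i; rewrite util_extend_thbar.
move=> i thbar_i_neq0; rewrite util_extend_thbar theq_tight //.
by apply: contra_neq thbar_i_neq0; apply: extend_supp.
Qed.

End OptimalStableEquilibrium.

Unset Implicit Arguments.

Theorem theorem6 (R : realFieldType) (k : nat) (W : 'M[R]_k) (mu : R)
  (W01 : forall i j, 0 <= W i j <= 1)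
  (Wsym : W^T = W)
  (Wpsd : forall x : 'cV[R]_k, 0 <= (x^T *m W *m x) 0 0)
  (Wdiag : forall i, W i i = 1)
  (mu_pos : 0 < mu)
  (theq : 'I_k -> R)
  (Heq : optimal_stable_eq (fun i j => W i j) mu theq) :
  socially_optimal (restr_mx (fun i => theq i != 0) W) mu
                   (restr_vec (fun i => theq i != 0) theq) /\
  forall thbar : {i : 'I_k | theq i != 0} -> R,
    socially_optimal (restr_mx (fun i => theq i != 0) W) mu thbar ->
    optimal_stable_eq (fun i j => W i j) mu (extend thbar).
Proof.
(* The bounds [W01] on the entries of [W] are not needed. *)
split.
- exact (restr_theq_socially_optimal Wsym Wdiag mu_pos Heq).
- exact (extend_thbar_optimal_stable_eq Wsym Wpsd Wdiag mu_pos Heq).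
Qed.
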